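(* In the setting described in the context, equality $H(\theta)=C_\Upsilon(\theta)$ holds if and only if $\langle w_j'(\theta)|w_k(\theta)\rangle=0$ for all $j,k$ (including $j=k$) with $p_j(\theta)>0$ and $p_k(\theta)>0$.
   Context: A one-parameter quantum channel is a map $\rho_0\mapsto\sum_k E_k(\theta)\rho_0E_k(\theta)^\dagger$ on density matrices on $\mathbb{C}^d$, with Kraus operators $E_k(\theta)$ depending differentiably on a real parameter $\theta$ and $\sum_k E_k^\dagger E_k=I$. The input state is a fixed pure state $\rho_0=|\psi_0\rangle\langle\psi_0|$. The canonical Kraus operators $\{\Upsilon_k(\theta)\}_{k=1}^d$ form a differentiable Kraus representation of the same channel with $\mathrm{tr}\{\Upsilon_k\rho_0\Upsilon_j^\dagger\}=\delta_{jk}p_k(\theta)$. The output state is $\rho_{out}(\theta)=\sum_k p_k(\theta)|w_k(\theta)\rangle\langle w_k(\theta)|$, with $\{|w_k(\theta)\rangle\}$ an orthonormal basis depending differentiably on $\theta$ and $|w_k\rangle=p_k^{-1/2}\Upsilon_k|\psi_0\rangle$ when $p_k>0$. A prime denotes $d/d\theta$. $C_\Upsilon(\theta)=4\sum_k\mathrm{tr}\{\Upsilon_k'\rho_0\Upsilon_k'^\dagger\}$ (the Sarovar–Milburn bound), and $H(\theta)=\mathrm{tr}\{\rho_{out}\lambda^2\}$ is the SLD quantum information, $\lambda$ being a self-adjoint solution of $\rho_{out}'=\frac12(\rho_{out}\lambda+\lambda\rho_{out})$. *)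

From mathcomp Require Import all_boot all_order all_algebra.
From mathcomp Require Import all_classical all_reals all_analysis.
From mathcomp Require Import complex.
Import numFieldNormedType.Exports.
Import GRing.Theory Num.Theory.
Set Implicit Arguments. Unset Strict Implicit. Unset Printing Implicit Defensive.
Local Open Scope ring_scope.

Section QDefs.
Variable R : realType.
Local Notation C := R[i].

Definition adj (m n : nat) (A : 'M[C]_(m, n)) : 'M[C]_(n, m) :=
  \matrix_(i < n, j < m) conjc (A j i).

Definition braket (d : nat) (a b : 'cV[C]_d) : C := (adj a *m b) 0 0.

Definition mx_derivable (m n : nat) (f : R -> 'M[C]_(m, n)) (t : R) : Prop :=
  forall i j, derivable (fun s => complex.Re (f s i j)) t 1 /\
              derivable (fun s => complex.Im (f s i j)) t 1.

Definition mx_deriv (m n : nat) (f : R -> 'M[C]_(m, n)) (t : R) : 'M[C]_(m, n) :=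
  \matrix_(i < m, j < n)
    complex.Complex ('D_1 (fun s => complex.Re (f s i j)) t) ('D_1 (fun s => complex.Im (f s i j)) t).

Definition pure_state (d : nat) (psi0 : 'cV[C]_d) : 'M[C]_d := psi0 *m adj psi0.

Definition rho_out (d : nat) (p : 'I_d -> R -> R) (w : 'I_d -> R -> 'cV[C]_d)
  (t : R) : 'M[C]_d :=
  \sum_(k < d) ((p k t)%:C)%C *: (w k t *m adj (w k t)).

Definition C_Ups (d : nat) (Ups : 'I_d -> R -> 'M[C]_d) (psi0 : 'cV[C]_d)
  (t : R) : C :=
  4%:R * \sum_(k < d)
    \tr (mx_deriv (Ups k) t *m pure_state psi0 *m adj (mx_deriv (Ups k) t)).

Definition is_SLD (d : nat) (rho : R -> 'M[C]_d) (t : R) (lam : 'M[C]_d) : Prop :=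
  adj lam = lam /\
  mx_deriv rho t = (2%:R)^-1 *: (rho t *m lam + lam *m rho t).

Definition SLD_info (d : nat) (rho : R -> 'M[C]_d) (t : R) (lam : 'M[C]_d) : C :=
  \tr (rho t *m (lam *m lam)).

End QDefs.

(* Write Ups_k psi0 = s_k w_k with s_k = sqrt p_k and expand every quantity in the
   moving orthonormal basis w(theta), with a_jk = <w_j'|w_k> (an anti-Hermitian matrix,
   since <w_j|w_k> is constant).  Then <w_k|(Ups_j psi0)'> = delta_jk s_j' - s_j a_kj,
   while the SLD equation gives (p_j + p_k)/2 lambda_jk = delta_jk (2 s_j s_j') + (p_j - p_k) a_jk.
   Comparing the two term by term,
     4 |<w_k|(Ups_j psi0)'>|^2 = p_j |lambda_jk|^2 + 16 p_j^2 p_k |a_jk|^2 / (p_j + p_k)^2,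
   and summing over j, k (Parseval) gives C_Ups = H + (a sum of nonnegative terms), each of
   which vanishes iff p_j p_k = 0 or a_jk = 0.  Where p_j vanishes, s_j' = 0 too, because
   s_j >= 0 attains its minimum there. *)

From mathcomp Require Import all_boot all_order all_algebra.
From mathcomp Require Import all_classical all_reals all_analysis.
From mathcomp Require Import complex.
From mathcomp Require Import ring lra.
Import numFieldNormedType.Exports.
Import Order.TTheory GRing.Theory Num.Theory.

Local Open Scope ring_scope.

Section ComplexDerivative.
Context {R : realType}.
Local Notation C := R[i].
Local Notation Re := complex.Re.
Local Notation Im := complex.Im.
Implicit Types (f g : R -> C) (t : R) (a b : C).

Lemma complex_ReM a b : Re (a * b) = Re a * Re b - Im a * Im b.
Proof. by case: a => a1 a2; case: b. Qed.

Lemma complex_ImM a b : Im (a * b) = Re a * Im b + Im a * Re b.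
Proof. by case: a => a1 a2; case: b. Qed.

Definition is_cderive f t (z : C) : Prop :=
  is_derive t 1 (fun s => Re (f s)) (Re z) /\ is_derive t 1 (fun s => Im (f s)) (Im z).

Lemma is_cderive_cst (c : C) t : is_cderive (fun=> c) t 0.
Proof. by split; apply: is_derive_cst. Qed.

Lemma is_cderive_real (c : R -> R) t (dc : R) :
  is_derive t 1 c dc -> is_cderive (fun s => (c s)%:C%C) t dc%:C%C.
Proof. by split => //=; apply: is_derive_cst. Qed.

Lemma is_cderiveD f g t a b : is_cderive f t a -> is_cderive g t b ->
  is_cderive (fun s => f s + g s) t (a + b).
Proof.
move=> [fR fI] [gR gI]; split; rewrite raddfD.
  have -> : (fun s => Re (f s + g s)) = (fun s => Re (f s)) + (fun s => Re (g s)).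
    by apply/funext => s; rewrite raddfD.
  exact: is_deriveD.
have -> : (fun s => Im (f s + g s)) = (fun s => Im (f s)) + (fun s => Im (g s)).
  by apply/funext => s; rewrite raddfD.
exact: is_deriveD.
Qed.

Lemma is_cderive_sum n (f : 'I_n -> R -> C) t (a : 'I_n -> C) :
  (forall i, is_cderive (f i) t (a i)) ->
  is_cderive (fun s => \sum_(i < n) f i s) t (\sum_(i < n) a i).
Proof.
elim: n f a => [|n IHn] f a df.
  by rewrite big_ord0; under eq_fun do rewrite big_ord0; apply: is_cderive_cst.
rewrite big_ord_recl; under eq_fun do rewrite big_ord_recl.
by apply: is_cderiveD => //; apply: IHn.
Qed.

Lemma is_cderiveM f g t a b : is_cderive f t a -> is_cderive g t b ->
  is_cderive (fun s => f s * g s) t (f t * b + a * g t).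
Proof.
move=> [fR fI] [gR gI]; split.
  have -> : (fun s => Re (f s * g s)) =
      (fun s => Re (f s)) * (fun s => Re (g s)) - (fun s => Im (f s)) * (fun s => Im (g s)).
    by apply/funext => s; rewrite complex_ReM.
  apply: (is_derive_eq (is_deriveB (is_deriveM fR gR) (is_deriveM fI gI))).
  by rewrite [Re (_ + _)]raddfD /= !complex_ReM /GRing.scale /=; lra.
have -> : (fun s => Im (f s * g s)) =
    (fun s => Re (f s)) * (fun s => Im (g s)) + (fun s => Im (f s)) * (fun s => Re (g s)).
  by apply/funext => s; rewrite complex_ImM.
apply: (is_derive_eq (is_deriveD (is_deriveM fR gI) (is_deriveM fI gR))).
by rewrite [Im (_ + _)]raddfD /= !complex_ImM /GRing.scale /=; lra.
Qed.

Lemma is_cderive_conj f t a : is_cderive f t a -> is_cderive (fun s => (f s)^*%C) t a^*%C.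
Proof.
have ReJ (z : C) : Re z^*%C = Re z by case: z.
have ImJ (z : C) : Im z^*%C = - Im z by case: z.
move=> [fR fI]; split; first by under eq_fun do rewrite ReJ; rewrite ReJ.
have -> : (fun s => Im (f s)^*%C) = - (fun s => Im (f s)) by apply/funext => s; rewrite ImJ.
by rewrite ImJ; apply: is_deriveN.
Qed.

End ComplexDerivative.

Section MatrixDerivative.
Context {R : realType}.
Local Notation C := R[i].

Definition is_mxderive {m n} (f : R -> 'M[C]_(m, n)) (t : R) (M : 'M[C]_(m, n)) :=
  forall i j, is_cderive (fun s => f s i j) t (M i j).

Lemma mx_derivableP {m n} {f : R -> 'M[C]_(m, n)} {t} :
  mx_derivable f t -> is_mxderive f t (mx_deriv f t).
Proof. by move=> df i j; rewrite mxE; case: (df i j) => /derivableP ? /derivableP. Qed.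

Lemma mx_derive_val {m n} {f : R -> 'M[C]_(m, n)} {t M} :
  is_mxderive f t M -> mx_deriv f t = M.
Proof.
move=> df; apply/matrixP => i j; rewrite mxE.
by case: (df i j) => ? ?; rewrite !derive_val; case: (M i j).
Qed.

Lemma is_mxderive_cst {m n} (M : 'M[C]_(m, n)) t : is_mxderive (fun=> M) t 0.
Proof. by move=> i j; rewrite mxE; apply: is_cderive_cst. Qed.

Lemma is_mxderive_sum {m n k} (f : 'I_k -> R -> 'M[C]_(m, n)) t (M : 'I_k -> 'M[C]_(m, n)) :
  (forall l, is_mxderive (f l) t (M l)) ->
  is_mxderive (fun s => \sum_(l < k) f l s) t (\sum_(l < k) M l).
Proof.
move=> df i j; rewrite summxE; under eq_fun do rewrite summxE.
by apply: is_cderive_sum => l; apply: df.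
Qed.

Lemma is_mxderive_mul {m n q} {f : R -> 'M[C]_(m, n)} {g : R -> 'M[C]_(n, q)} {t M N} :
  is_mxderive f t M -> is_mxderive g t N ->
  is_mxderive (fun s => f s *m g s) t (M *m g t + f t *m N).
Proof.
move=> df dg i j; under eq_fun do rewrite mxE.
have -> : (M *m g t + f t *m N) i j = \sum_l (f t i l * N l j + M i l * g t l j).
  by rewrite !mxE -big_split /=; apply: eq_bigr => l _; rewrite addrC.
by apply: is_cderive_sum => l; apply: is_cderiveM.
Qed.

Lemma is_mxderive_adj {m n} {f : R -> 'M[C]_(m, n)} {t M} :
  is_mxderive f t M -> is_mxderive (fun s => adj (f s)) t (adj M).
Proof. by move=> df i j; under eq_fun do rewrite mxE; rewrite mxE; apply: is_cderive_conj. Qed.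

Lemma is_mxderive_scale_real {m n} {c : R -> R} {f : R -> 'M[C]_(m, n)} {t dc : R} {M} :
  is_derive t 1 c dc -> is_mxderive f t M ->
  is_mxderive (fun s => (c s)%:C%C *: f s) t (dc%:C%C *: f t + (c t)%:C%C *: M).
Proof.
move=> c_deriv f_deriv i j; under eq_fun do rewrite mxE.
by rewrite !mxE addrC; apply: is_cderiveM => //; apply: is_cderive_real.
Qed.

End MatrixDerivative.

Section Adjoint.
Context {R : realType}.
Local Notation C := R[i].

Lemma adjK m n (A : 'M[C]_(m, n)) : adj (adj A) = A.
Proof. by apply/matrixP => i j; rewrite !mxE conjcK. Qed.

Lemma adj_mul m n q (A : 'M[C]_(m, n)) (B : 'M[C]_(n, q)) : adj (A *m B) = adj B *m adj A.
Proof.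
apply/matrixP => i j; rewrite !mxE rmorph_sum; apply: eq_bigr => k _.
by rewrite !mxE rmorphM mulrC.
Qed.

Lemma adj_scale m n (c : C) (A : 'M[C]_(m, n)) : adj (c *: A) = c^*%C *: adj A.
Proof. by apply/matrixP => i j; rewrite !mxE rmorphM. Qed.

End Adjoint.

Section Braket.
Context {R : realType} {d : nat}.
Local Notation C := R[i].
Implicit Types (a b c : 'cV[C]_d) (z : C).

Lemma braketE a b : braket a b = \sum_i (a i 0)^*%C * b i 0.
Proof. by rewrite /braket mxE; apply: eq_bigr => i _; rewrite mxE. Qed.

Lemma braketC a b : braket b a = (braket a b)^*%C.
Proof.
rewrite !braketE rmorph_sum; apply: eq_bigr => i _.
by rewrite rmorphM /= conjcK mulrC.
Qed.

Lemma braketDr a b c : braket a (b + c) = braket a b + braket a c.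
Proof. by rewrite /braket mulmxDr mxE. Qed.

Lemma braketZr a b z : braket a (z *: b) = z * braket a b.
Proof. by rewrite /braket -scalemxAr mxE. Qed.

Lemma braket_sumr k a (b : 'I_k -> 'cV[C]_d) :
  braket a (\sum_(l < k) b l) = \sum_(l < k) braket a (b l).
Proof. by rewrite /braket mulmx_sumr summxE. Qed.

Lemma braketDl a b c : braket (a + b) c = braket a c + braket b c.
Proof. by rewrite braketC braketDr rmorphD /= -!braketC. Qed.

Lemma braketZl a b z : braket (z *: a) b = z^*%C * braket a b.
Proof. by rewrite braketC braketZr rmorphM /= -braketC. Qed.

Lemma braket_mulmxl (M : 'M[C]_d) a b : braket (M *m a) b = braket a (adj M *m b).
Proof. by rewrite /braket adj_mul mulmxA. Qed.

Lemma braket_mulmxr (M : 'M[C]_d) a b : braket a (M *m b) = braket (adj M *m a) b.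
Proof. by rewrite braket_mulmxl adjK. Qed.

Lemma braket_mulmx_selfadj (M : 'M[C]_d) a b :
  adj M = M -> braket b (M *m a) = (braket a (M *m b))^*%C.
Proof. by move=> M_adj; rewrite braket_mulmxr M_adj braketC. Qed.

Lemma outer_mulmx m (M : 'M[C]_(m, 1)) a b : M *m adj a *m b = braket a b *: M.
Proof. by apply/matrixP => i j; rewrite -mulmxA !mxE big_ord1 (ord1 j) mulrC. Qed.

Lemma trace_outer a b : \tr (a *m adj b) = braket b a.
Proof. by rewrite /mxtrace braketE; apply: eq_bigr => i _; rewrite !mxE big_ord1 mxE mulrC. Qed.

Lemma braket_self a : braket a a = \sum_i `|a i 0| ^+ 2.
Proof. by rewrite braketE; apply: eq_bigr => i _; rewrite sqr_normc mulrC. Qed.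

Lemma braket_self_ge0 a : 0 <= braket a a.
Proof. by rewrite braket_self sumr_ge0 // => i _; rewrite exprn_ge0. Qed.

Lemma braket_self_eq0 a : braket a a = 0 -> a = 0.
Proof.
rewrite braket_self => /psumr_eq0P a0; apply/matrixP => i j; rewrite (ord1 j) mxE.
by apply/eqP; rewrite -normr_eq0 -sqrf_eq0 a0 // => l _; rewrite exprn_ge0.
Qed.

End Braket.

Lemma trace_pure_state (R : realType) m d (X : 'M[R[i]]_(m, d)) (a : 'cV[R[i]]_d) :
  \tr (X *m pure_state a *m adj X) = braket (X *m a) (X *m a).
Proof. by rewrite /pure_state -trace_outer adj_mul !mulmxA. Qed.

Section OrthonormalBasis.
Context {R : realType} {d : nat} {e : 'I_d -> 'cV[R[i]]_d}.
Local Notation C := R[i].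
Hypothesis e_orthonormal : forall j k, braket (e j) (e k) = if j == k then 1 else 0.

Lemma sum_outer_orthonormal : \sum_j e j *m adj (e j) = 1%:M.
Proof.
pose E : 'M[C]_d := \matrix_(i, j) e j i 0.
have EE : adj E *m E = 1%:M.
  apply/matrixP => j k.
  have -> : (1%:M : 'M[C]_d) j k = if j == k then 1 else 0 by rewrite mxE; case: eqP.
  by rewrite -e_orthonormal braketE mxE; apply: eq_bigr => i _; rewrite !mxE.
apply/matrixP => i l; rewrite -(mulmx1C EE) summxE !mxE; apply: eq_bigr => j _.
by rewrite !mxE big_ord1 !mxE.
Qed.

Lemma braket_sum_orthonormal (c : 'I_d -> C) k : braket (e k) (\sum_j c j *: e j) = c k.
Proof.
rewrite braket_sumr (bigD1 k) //= braketZr e_orthonormal eqxx mulr1 big1 ?addr0 // => j.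
by rewrite braketZr e_orthonormal eq_sym => /negbTE ->; rewrite mulr0.
Qed.

Lemma orthonormal_expansion (x : 'cV[C]_d) : x = \sum_j braket (e j) x *: e j.
Proof.
rewrite -{1}(mul1mx x) -sum_outer_orthonormal mulmx_suml; apply: eq_bigr => j _.
by rewrite outer_mulmx.
Qed.

Lemma orthonormal_coord_inj (x y : 'cV[C]_d) :
  (forall j, braket (e j) x = braket (e j) y) -> x = y.
Proof.
move=> xy; rewrite (orthonormal_expansion x) (orthonormal_expansion y).
by apply: eq_bigr => j _; rewrite xy.
Qed.

Lemma trace_orthonormal (X : 'M[C]_d) : \tr X = \sum_j braket (e j) (X *m e j).
Proof.
rewrite -{1}(mulmx1 X) -sum_outer_orthonormal mulmx_sumr raddf_sum /=; apply: eq_bigr => j _.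
by rewrite mulmxA trace_outer.
Qed.

Lemma parseval (x y : 'cV[C]_d) :
  braket x y = \sum_j (braket (e j) x)^*%C * braket (e j) y.
Proof.
rewrite {1}(orthonormal_expansion y) braket_sumr; apply: eq_bigr => j _.
by rewrite braketZr [braket x _]braketC mulrC.
Qed.

End OrthonormalBasis.

Section SLDGap.
Context {R : realType}.
Local Notation C := R[i].
Implicit Types (P Q S dS a L : C).

Definition sld_gap P Q a : C := 16 * P ^+ 2 * Q / (P + Q) ^+ 2 * `|a| ^+ 2.

Lemma sld_gap_ge0 P Q a : 0 <= P -> 0 <= Q -> 0 <= sld_gap P Q a.
Proof.
move=> P0 Q0; rewrite /sld_gap mulr_ge0 ?exprn_ge0 // divr_ge0 ?exprn_ge0 ?addr_ge0 //.
by rewrite !mulr_ge0 ?exprn_ge0 ?ler0n.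
Qed.

Lemma sld_gap_eq0 P Q a : 0 <= P -> 0 <= Q ->
  sld_gap P Q a = 0 <-> (0 < P -> 0 < Q -> a = 0).
Proof.
move=> P0 Q0; rewrite /sld_gap; split => [gap0 Pp Qp|a0].
  have PQ : P + Q != 0 by rewrite gt_eqF ?addr_gt0.
  apply/eqP; move/eqP: gap0; rewrite !mulf_eq0 invr_eq0 !expf_eq0 /= normr_eq0 pnatr_eq0.
  by rewrite (gt_eqF Pp) (gt_eqF Qp) (negbTE PQ) /= orbb; exact: id.
move: P0 Q0; rewrite !le_eqVlt => /orP[/eqP<-|Pp]; first by rewrite !(expr0n, mulr0, mul0r).
case/orP=> [/eqP<-|Qp]; first by rewrite !(mulr0, mul0r).
by rewrite a0 // normr0 expr0n mulr0.
Qed.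

Lemma sld_term_diag S dS a L : S^*%C = S -> dS^*%C = dS -> (S = 0 -> dS = 0) ->
  a^*%C = - a -> (S ^+ 2 + S ^+ 2) / 2 * L = S * dS + S * dS ->
  4 * `|dS - S * a| ^+ 2 = S ^+ 2 * `|L| ^+ 2 + sld_gap (S ^+ 2) (S ^+ 2) a.
Proof.
rewrite /sld_gap => SJ dSJ dS0 aJ hL.
have [S0|S0] := eqVneq S 0.
  by rewrite S0 dS0 // !(mul0r, subr0, normr0, expr0n) /= !(mulr0, mul0r, add0r).
have -> : L = 2 * dS / S.
  apply: (mulfI (expf_neq0 2 S0)).
  have -> : S ^+ 2 * L = (S ^+ 2 + S ^+ 2) / 2 * L by field.
  by rewrite hL; field; rewrite S0.
rewrite !sqr_normc !(rmorphB, rmorphM, fmorphV, rmorphXn, rmorph_nat) /= SJ dSJ aJ.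
by field; rewrite -mulr2n mulrn_eq0 /= sqrf_eq0 S0.
Qed.

Lemma sld_term_offdiag P Q a L : 0 <= P -> 0 <= Q -> (P + Q) / 2 * L = (P - Q) * a ->
  4 * (P * `|a| ^+ 2) = P * `|L| ^+ 2 + sld_gap P Q a.
Proof.
rewrite /sld_gap => P0 Q0 hL.
have [->|Pn0] := eqVneq P 0; first by rewrite !(mul0r, expr0n, mulr0, add0r).
have PQ : P + Q != 0 by rewrite gt_eqF // ltr_pwDl // lt_def Pn0.
have -> : L = 2 * (P - Q) / (P + Q) * a.
  apply: (mulfI (_ : (P + Q) / 2 != 0)); first by rewrite mulf_neq0 ?invr_eq0 ?pnatr_eq0.
  by rewrite hL; field.
have coef_real : 2 * (P - Q) / (P + Q) \is Num.real.
  by rewrite !rpredM ?rpredV ?rpredB ?rpredD ?ger0_real.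
by rewrite normrM exprMn (real_normK coef_real); field.
Qed.

End SLDGap.

Lemma sum_if_eq (V : nmodType) n (F : 'I_n -> V) k :
  \sum_i (if i == k then F i else 0) = F k.
Proof. by rewrite -big_mkcond big_pred1_eq. Qed.

Section CanonicalKraus.
Context {R : realType} {d : nat} {psi0 : 'cV[R[i]]_d} {Ups : 'I_d -> R -> 'M[R[i]]_d}
  {p : 'I_d -> R -> R} {w : 'I_d -> R -> 'cV[R[i]]_d}.
Local Notation C := R[i].
Local Notation v k t := (Ups k t *m psi0).
Local Notation dv k t := (mx_deriv (Ups k) t *m psi0).

Hypothesis Ups_derivable : forall k t, mx_derivable (Ups k) t.
Hypothesis p_braket : forall k t, braket (v k t) (v k t) = (p k t)%:C%C.
Hypothesis w_derivable : forall k t, mx_derivable (w k) t.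
Hypothesis w_orthonormal : forall t j k, braket (w j t) (w k t) = if j == k then 1 else 0.
Hypothesis w_Ups : forall t k, 0 < p k t -> w k t = ((Num.sqrt (p k t))^-1)%:C%C *: v k t.

Lemma p_ge0 k t : 0 <= p k t.
Proof. by rewrite -ler0c -p_braket braket_self_ge0. Qed.

Lemma Ups_psi0_eq0 k t : p k t = 0 -> v k t = 0.
Proof. by move=> p0; apply: braket_self_eq0; rewrite p_braket p0. Qed.

(* This is [sqrt p_k]; writing it as [Re <w_k|Ups_k psi0>] makes it differentiable. *)
Definition amp k t := complex.Re (braket (w k t) (v k t)).

Lemma Ups_psi0E k t : v k t = (Num.sqrt (p k t))%:C%C *: w k t.
Proof.
have [pp|] := ltP 0 (p k t).
  by rewrite w_Ups // scalerA -rmorphM /= divff ?scale1r // gt_eqF ?sqrtr_gt0.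
by rewrite le_eqVlt ltNge p_ge0 orbF => /eqP p0; rewrite Ups_psi0_eq0 // p0 sqrtr0 scale0r.
Qed.

Lemma ampE k t : amp k t = Num.sqrt (p k t).
Proof. by rewrite /amp Ups_psi0E braketZr w_orthonormal eqxx mulr1. Qed.

Lemma amp_ge0 k t : 0 <= amp k t.
Proof. by rewrite ampE sqrtr_ge0. Qed.

Lemma amp_sqr k t : amp k t ^+ 2 = p k t.
Proof. by rewrite ampE sqr_sqrtr ?p_ge0. Qed.

Lemma p_amp_sqrC k t : (p k t)%:C%C = (amp k t)%:C%C ^+ 2.
Proof. by rewrite -rmorphXn amp_sqr. Qed.

Lemma amp_real k t : (amp k t)%:C%C \is Num.real.
Proof. by rewrite ger0_real // ler0c amp_ge0. Qed.

Lemma is_mxderive_Ups_psi0 k t : is_mxderive (fun s => v k s) t (dv k t).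
Proof.
have := is_mxderive_mul (mx_derivableP (Ups_derivable k t)) (is_mxderive_cst psi0 t).
by rewrite mulmx0 addr0.
Qed.

Lemma amp_derivable k t : derivable (amp k) t 1.
Proof.
have := is_mxderive_mul (is_mxderive_adj (mx_derivableP (w_derivable k t)))
  (is_mxderive_Ups_psi0 k t).
by case/(_ 0 0) => ? _; apply: ex_derive.
Qed.

(* [amp k >= 0] attains its minimum [0] wherever [p k] vanishes. *)
Lemma derive_amp_eq0 k t : p k t = 0 -> 'D_1 (amp k) t = 0.
Proof.
move=> p0; apply: derive_val.
apply: (@derive1_at_min _ _ (t - 1) (t + 1)).
- lra.
- by move=> s _; apply: amp_derivable.
- by rewrite in_itv /=; apply/andP; split; lra.
- by move=> s _; rewrite ampE p0 sqrtr0 amp_ge0.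
Qed.

Lemma derive_Ups_psi0 k t :
  dv k t = ('D_1 (amp k) t)%:C%C *: w k t + (amp k t)%:C%C *: mx_deriv (w k) t.
Proof.
have := is_mxderive_scale_real (derivableP (amp_derivable k t)) (mx_derivableP (w_derivable k t)).
have -> : (fun s => (amp k s)%:C%C *: w k s) = (fun s => v k s).
  by apply/funext => s; rewrite Ups_psi0E ampE.
by move/mx_derive_val <-; rewrite (mx_derive_val (is_mxderive_Ups_psi0 k t)).
Qed.

Lemma rho_outE t : rho_out p w t = \sum_k v k t *m adj (v k t).
Proof.
apply: eq_bigr => k _; rewrite Ups_psi0E adj_scale conjc_real -scalemxAl -scalemxAr scalerA.
by rewrite -rmorphM /= -expr2 sqr_sqrtr ?p_ge0.
Qed.

Lemma derive_rho_out t :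
  mx_deriv (rho_out p w) t = \sum_k (dv k t *m adj (v k t) + v k t *m adj (dv k t)).
Proof.
apply: mx_derive_val.
have -> : rho_out p w = fun s => \sum_k v k s *m adj (v k s) by apply/funext => s; apply: rho_outE.
apply: is_mxderive_sum => k.
exact: is_mxderive_mul (is_mxderive_Ups_psi0 k t) (is_mxderive_adj (is_mxderive_Ups_psi0 k t)).
Qed.

Lemma braket_derive_w j k t :
  braket (mx_deriv (w j) t) (w k t) + braket (w j t) (mx_deriv (w k) t) = 0.
Proof.
have := is_mxderive_mul (is_mxderive_adj (mx_derivableP (w_derivable j t)))
  (mx_derivableP (w_derivable k t)).
have -> : (fun s => adj (w j s) *m w k s) = fun=> (if j == k then 1 else 0)%:M.
  apply/funext => s; apply/matrixP => a b; rewrite (ord1 a) (ord1 b) [RHS]mxE eqxx mulr1n.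
  exact: w_orthonormal.
move/mx_derive_val; rewrite (mx_derive_val (is_mxderive_cst _ t)) => /matrixP /(_ 0 0).
by rewrite mxE [RHS]mxE.
Qed.

Section FixedParameter.
Variable th : R.
Local Notation W k := (w k th).
Local Notation dW k := (mx_deriv (w k) th).
Local Notation P k := (p k th)%:C%C.
Local Notation S k := (amp k th)%:C%C.
Local Notation dS k := ('D_1 (amp k) th)%:C%C.
Local Notation rho := (rho_out p w th).
Local Notation drho := (mx_deriv (rho_out p w) th).
Local Notation W_orthonormal := (w_orthonormal th).

Definition dw_overlap j k := braket (dW j) (W k).

Lemma braket_w_dw j k : braket (W j) (dW k) = - dw_overlap j k.
Proof. by apply/eqP; rewrite -addr_eq0 addrC braket_derive_w. Qed.

Lemma dw_overlap_skew j k : dw_overlap k j = - (dw_overlap j k)^*%C.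
Proof. by rewrite /dw_overlap braketC braket_w_dw rmorphN. Qed.

Lemma braket_w_dv j k : braket (W j) (dv k th) = (j == k)%:R * dS k - S k * dw_overlap j k.
Proof.
rewrite derive_Ups_psi0 braketDr !braketZr W_orthonormal braket_w_dw.
by case: eqP => _; rewrite /= ?mulr1 ?mulr0 ?mul1r ?mul0r; ring.
Qed.

Lemma braket_dv_w j k : braket (dv j th) (W k) = (j == k)%:R * dS j + S j * dw_overlap j k.
Proof.
rewrite derive_Ups_psi0 braketDl !braketZl !conjc_real W_orthonormal.
by case: eqP => _; rewrite /= ?mulr1 ?mulr0 ?mul1r ?mul0r.
Qed.

Lemma rho_mulmx x : rho *m x = \sum_m (P m * braket (W m) x) *: W m.
Proof.
rewrite /rho_out mulmx_suml; apply: eq_bigr => m _.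
by rewrite -scalemxAl outer_mulmx scalerA.
Qed.

Lemma braket_w_rho j x : braket (W j) (rho *m x) = P j * braket (W j) x.
Proof. by rewrite rho_mulmx (braket_sum_orthonormal (e := w^~ th)). Qed.

Lemma rho_w k : rho *m W k = P k *: W k.
Proof.
apply: (@orthonormal_coord_inj _ _ (w^~ th) W_orthonormal) => j.
by rewrite braket_w_rho braketZr W_orthonormal; case: eqP => [->|]; rewrite ?mulr0.
Qed.

Lemma braket_w_drho j k : braket (W j) (drho *m W k) =
  (j == k)%:R * (S k * dS k + S j * dS j) + (P j - P k) * dw_overlap j k.
Proof.
have braket_w_v m : braket (W j) (v m th) = if j == m then S m else 0.
  by rewrite Ups_psi0E -ampE braketZr W_orthonormal; case: eqP; rewrite ?mulr1 ?mulr0.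
have braket_v_w m : braket (v m th) (W k) = if m == k then S m else 0.
  by rewrite Ups_psi0E -ampE braketZl conjc_real W_orthonormal; case: eqP; rewrite ?mulr1 ?mulr0.
rewrite derive_rho_out mulmx_suml braket_sumr.
under eq_bigr do rewrite mulmxDl !outer_mulmx braketDr !braketZr braket_w_v braket_v_w
  (fun_if (fun c => c * _)) (fun_if (fun c => _ * c)) mul0r mulr0 [j == _]eq_sym.
rewrite big_split /= !sum_if_eq braket_w_dv braket_dv_w !p_amp_sqrC.
(* [ring] would compare the concrete atoms up to conversion, which is very slow. *)
have coef_eq (a b c e f g : C) :
  b * (g * e - b * f) + (g * c + a * f) * a = g * (b * e + a * c) + (a ^+ 2 - b ^+ 2) * f.
  by ring.
exact: coef_eq.
Qed.

Lemma braket_w_drho_SLD lam : is_SLD (rho_out p w) th lam -> forall j k,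
  braket (W j) (drho *m W k) = (P j + P k) / 2 * braket (W j) (lam *m W k).
Proof.
move=> [_ ->] j k.
rewrite -scalemxAl braketZr mulmxDl -!mulmxA braketDr braket_w_rho rho_w -scalemxAr braketZr.
by rewrite -mulrDl mulrA [2^-1 * _]mulrC.
Qed.

Lemma SLD_infoE lam : is_SLD (rho_out p w) th lam ->
  SLD_info (rho_out p w) th lam = \sum_j \sum_k P j * `|braket (W j) (lam *m W k)| ^+ 2.
Proof.
move=> [lam_adj _]; rewrite /SLD_info (trace_orthonormal W_orthonormal).
apply: eq_bigr => j _.
rewrite -!mulmxA braket_w_rho braket_mulmxr lam_adj (parseval W_orthonormal) mulr_sumr.
apply: eq_bigr => k _.
by rewrite braket_mulmx_selfadj // conjcK -sqr_normc.
Qed.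

Lemma C_UpsE : C_Ups Ups psi0 th = \sum_j \sum_k 4 * `|braket (W k) (dv j th)| ^+ 2.
Proof.
rewrite /C_Ups mulr_sumr; apply: eq_bigr => j _.
rewrite trace_pure_state (parseval W_orthonormal) mulr_sumr; apply: eq_bigr => k _.
by rewrite [_^*%C * _]mulrC -sqr_normc.
Qed.

Lemma sld_term lam : is_SLD (rho_out p w) th lam -> forall j k,
  4 * `|braket (W k) (dv j th)| ^+ 2 =
    P j * `|braket (W j) (lam *m W k)| ^+ 2 + sld_gap (P j) (P k) (dw_overlap j k).
Proof.
move=> sld j k; have := braket_w_drho_SLD lam sld j k; rewrite braket_w_drho braket_w_dv.
have [<-|jk] := eqVneq j k.
  rewrite mulr1n !mul1r subrr mul0r addr0 p_amp_sqrC => /esym hL.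
  apply: sld_term_diag hL; rewrite ?conjc_real //.
  - by move/complexI => amp0; rewrite derive_amp_eq0 // -amp_sqr amp0 expr0n.
  - by rewrite {2}(dw_overlap_skew j j) opprK.
rewrite !mulr0n !mul0r add0r sub0r => /esym hL.
rewrite normrN normrM exprMn (real_normK (amp_real j th)) -p_amp_sqrC.
rewrite dw_overlap_skew normrN norm_conjC.
by apply: sld_term_offdiag hL; rewrite ler0c p_ge0.
Qed.

Lemma SLD_info_eq_C_Ups lam : is_SLD (rho_out p w) th lam ->
  SLD_info (rho_out p w) th lam = C_Ups Ups psi0 th <->
  (forall j k, 0 < p j th -> 0 < p k th -> dw_overlap j k = 0).
Proof.
move=> sld; rewrite SLD_infoE // C_UpsE.
under [RHS]eq_bigr do under eq_bigr do rewrite (sld_term lam sld).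
rewrite [RHS](eq_bigr _ (fun j _ => big_split _ _ _ _ _)) big_split /=.
set H := \sum_(j < d) _; rewrite -{1}(addr0 H) pair_bigA /=.
have P_ge0 j : 0 <= P j by rewrite ler0c p_ge0.
have gap_ge0 (jk : 'I_d * 'I_d) : 0 <= sld_gap (P jk.1) (P jk.2) (dw_overlap jk.1 jk.2).
  exact: sld_gap_ge0.
split => [/addrI/esym/(psumr_eq0P (fun jk _ => gap_ge0 jk)) gap0 j k pj pk | overlap0].
  have := (sld_gap_eq0 _ _ (dw_overlap j k) (P_ge0 j) (P_ge0 k)).1 (gap0 (j, k) isT).
  by rewrite !ltcR; apply.
congr (_ + _); apply/esym/big1 => -[j k] _.
by apply/(sld_gap_eq0 _ _ _ (P_ge0 j) (P_ge0 k)) => /=; rewrite !ltcR; apply: overlap0.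
Qed.

End FixedParameter.

End CanonicalKraus.

Theorem lemma2 (R : realType) (d : nat)
  (psi0 : 'cV[R[i]]_d)
  (Ups : 'I_d -> R -> 'M[R[i]]_d)
  (p : 'I_d -> R -> R)
  (w : 'I_d -> R -> 'cV[R[i]]_d)
  (Hpsi0 : braket psi0 psi0 = 1)
  (HUdiff : forall k t, mx_derivable (Ups k) t)
  (HKraus : forall t, \sum_(k < d) adj (Ups k t) *m Ups k t = 1%:M)
  (Hcanon : forall t (j k : 'I_d),
     \tr (Ups k t *m pure_state psi0 *m adj (Ups j t))
       = if j == k then ((p k t)%:C)%C else 0)
  (Hwdiff : forall k t, mx_derivable (w k) t)
  (Hwon : forall t (j k : 'I_d),
     braket (w j t) (w k t) = if j == k then 1 else 0)
  (Hw : forall t k, 0 < p k t ->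
     w k t = (((Num.sqrt (p k t))^-1)%:C)%C *: (Ups k t *m psi0))
  (theta : R) (lam : 'M[R[i]]_d)
  (Hlam : is_SLD (rho_out p w) theta lam) :
  SLD_info (rho_out p w) theta lam = C_Ups Ups psi0 theta <->
  (forall j k : 'I_d, 0 < p j theta -> 0 < p k theta ->
     braket (mx_deriv (w j) theta) (w k theta) = 0).
Proof.
have p_braket k t : braket (Ups k t *m psi0) (Ups k t *m psi0) = (p k t)%:C%C.
  by rewrite -trace_pure_state Hcanon eqxx.
exact: (SLD_info_eq_C_Ups HUdiff p_braket Hwdiff Hwon Hw theta lam Hlam).
Qed.
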